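(* For all $\epsilon>0$ and $k\in\mathbb{N}$, let $d=d(\epsilon)=40\epsilon^{-2}$ and $N=N(\epsilon,k)=32k\epsilon^{-2}$. Let $D$ be a digraph on at least $N$ vertices. Then there is a $(k,d)$-connected subset $A\subseteq V(D)$ with $|A|\geq\delta^+(D)-\epsilon|D|$.
   Context: Digraphs are finite, without loops and without multiple edges (an edge may appear in both directions). A path is a sequence of distinct vertices $x_1,\dots,x_t$ with each $x_ix_{i+1}$ a directed edge; its length is its number of edges. For an uncoloured digraph $D$, a set $A\subseteq V(D)$ is $(k,d)$-connected in $D$ if for every $S\subseteq V(D)$ with $|S|\leq k-1$ and all $x,y\in A\setminus S$ there is a path from $x$ to $y$ in $D$ of length at most $d$ containing no vertex of $S$. $\delta^+(D)$ is the minimum out-degree and $|D|$ the number of vertices. *)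

From HB Require Import structures.
From mathcomp Require Import all_boot all_order all_algebra.
Set Implicit Arguments. Unset Strict Implicit. Unset Printing Implicit Defensive.
Import Order.TTheory GRing.Theory Num.Theory.

(* A digraph is a vertex type T : finType with an edge relation e : rel T
   (e x y means the directed edge xy is present); loops are excluded by the
   hypothesis [irreflexive e] in the theorem. Both xy and yx may be edges. *)

Definition outdeg (T : finType) (e : rel T) (x : T) : nat := #|[set y | e x y]|.

(* minimum out-degree delta^+(D); for the empty digraph it is 0
   (the seed #|T| never exceeds the minimum when T is nonempty, since
   every out-degree is < #|T|). *)
Definition mindeg (T : finType) (e : rel T) : nat :=
  \big[minn/#|T|]_(x : T) outdeg e x.

(* p is (the tail of) a path x = x_1, x_2, ..., x_t = y of length size p
   with distinct vertices, avoiding S. *)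
Definition avoiding_path (T : finType) (e : rel T) (S : {set T}) (x y : T)
  (p : seq T) : bool :=
  [&& path e x p, last x p == y, uniq (x :: p) & all (fun v => v \notin S) (x :: p)].

Local Open Scope ring_scope.

Definition kd_connected (R : realFieldType) (T : finType) (e : rel T)
  (k : nat) (d : R) (A : {set T}) : Prop :=
  forall S : {set T}, (#|S| < k)%N ->
  forall x y : T, x \in A :\: S -> y \in A :\: S ->
  exists p : seq T, avoiding_path e S x y p /\ (size p)%:R <= d.

(* Let the out-boundary of X be the set of out-neighbours of X outside X, and choose a nonempty
   C minimising |X| + lam |boundary X| with lam = 4/eps.  Minimality makes C an expander: every
   nonempty X inside C has at least (|C| - |X|)/lam out-neighbours in C - X, while comparing C
   with the whole vertex set gives |boundary C| <= eps |D|/4, so every vertex of C keeps at least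
   delta^+ - eps |D|/4 out-neighbours in C.  Double counting the edges inside C shows that all but
   about eps |D| vertices of C have at least s + k in-neighbours in C (s = eps |D|/2); these form A.
   Given |S| < k and x, y in A, the ball around x in D - S gains at least s/lam - k vertices of C
   per step as long as it misses s vertices of C, so within O(eps^-2) steps it meets one of the
   more than s in-neighbours of y in C - S. *)

From HB Require Import structures.
From mathcomp Require Import all_boot all_order all_algebra.
From mathcomp Require Import ring lra.
Import Order.TTheory GRing.Theory Num.Theory.

Set Implicit Arguments. Unset Strict Implicit. Unset Printing Implicit Defensive.

Section Digraph.
Variables (T : finType) (e : rel T).

Lemma mindeg_le_outdeg v : (mindeg e <= outdeg e v)%N.
Proof.
rewrite /mindeg unlock; have : v \in index_enum T by rewrite mem_index_enum.
elim: (index_enum T) => //= u r IHr; rewrite inE => /predU1P[-> | /IHr].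
  exact: geq_minl.
by rewrite geq_min => ->; rewrite orbT.
Qed.

Lemma mindeg_le_card : (mindeg e <= #|T|)%N.
Proof.
rewrite /mindeg; elim/big_ind: _ => // [a b leaT _ | v _]; first by rewrite geq_min leaT.
exact: max_card.
Qed.

Definition out_nbhd (X : {set T}) : {set T} := [set w | [exists v in X, e v w]].

Definition boundary (X : {set T}) : {set T} := out_nbhd X :\: X.

Definition out_nbhd_in (C : {set T}) (v : T) : {set T} := [set w in C | e v w].

Definition in_nbhd_in (C : {set T}) (y : T) : {set T} := [set v in C | e v y].

Lemma card_boundary_subset (X C : {set T}) : X \subset C ->
  (#|boundary X| <= #|boundary X :&: C| + #|boundary C|)%N.
Proof.
move=> sXC; rewrite -(cardsID C (boundary X)) leq_add2l subset_leq_card //.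
apply/subsetP => w; rewrite !inE => /andP[wNC /andP[_ /existsP[v /andP[vX evw]]]].
by rewrite wNC; apply/existsP; exists v; rewrite evw (subsetP sXC).
Qed.

Lemma outdeg_le_out_nbhd_in_boundary (C : {set T}) v : v \in C ->
  (outdeg e v <= #|out_nbhd_in C v| + #|boundary C|)%N.
Proof.
move=> vC; apply: leq_trans (leq_card_setU _ _); apply: subset_leq_card.
apply/subsetP => w; rewrite !inE => evw; case: (w \in C) => /=; first by rewrite evw.
by apply/existsP; exists v; rewrite vC evw.
Qed.

Lemma sum_card_out_nbhd_in (C : {set T}) :
  (\sum_(v in C) #|out_nbhd_in C v| = \sum_(y in C) #|in_nbhd_in C y|)%N.
Proof.
have card_sep (P : pred T) : #|[set w in C | P w]| = (\sum_(w in C) P w)%N.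
  rewrite -sum1_card big_mkcond [RHS]big_mkcond.
  by apply: eq_bigr => w _; rewrite inE; case: (w \in C).
under eq_bigr do rewrite card_sep.
under [RHS]eq_bigr do rewrite card_sep.
exact: exchange_big.
Qed.

Lemma avoiding_path_rcons (S : {set T}) x v w p :
  avoiding_path e S x v p -> e v w -> w \notin S ->
  exists q, avoiding_path e S x w q /\ (size q <= (size p).+1)%N.
Proof.
case/and4P => pth /eqP lastp _ avoidp evw wNS.
have pthw : path e x (rcons p w) by rewrite rcons_path pth lastp evw.
move: (last_rcons x p w); case/shortenP: pthw => q pthq uniqq sub_qp lastq.
exists q; split; last by rewrite -(size_rcons p w) uniq_leq_size //; case/andP: uniqq.
apply/and4P; split=> //; first by rewrite lastq.
apply/allP => z; rewrite inE => /predU1P[-> | /sub_qp].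
  by move/allP: avoidp; apply; apply: mem_head.
by rewrite mem_rcons inE => /predU1P[-> // | zp]; move/allP: avoidp; apply; rewrite inE zp orbT.
Qed.

Fixpoint ball (S : {set T}) (x : T) (i : nat) : {set T} :=
  if i is i'.+1 then ball S x i' :|: (out_nbhd (ball S x i') :\: S) else [set x] :\: S.

Lemma ball_subS (S : {set T}) x i : ball S x i \subset ball S x i.+1.
Proof. exact: subsetUl. Qed.

Lemma ball_center (S : {set T}) x i : x \notin S -> x \in ball S x i.
Proof. by move=> xNS; elim: i => [|i IHi] /=; rewrite !inE ?xNS ?eqxx ?IHi. Qed.

Lemma ball_path (S : {set T}) x i w : w \in ball S x i ->
  exists p, avoiding_path e S x w p /\ (size p <= i)%N.
Proof.
elim: i w => [|i IHi] w /=.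
  rewrite !inE => /andP[wNS /eqP wx]; subst w.
  by exists [::]; rewrite /avoiding_path /= eqxx wNS.
rewrite !inE => /orP[/IHi[p [pw lep]] | /andP[wNS /existsP[v /andP[vB evw]]]].
  by exists p; split => //; apply: leqW.
have [p [pv lep]] := IHi v vB; have [q [qw leq]] := avoiding_path_rcons pv evw wNS.
by exists q; split => //; apply: leq_trans leq _.
Qed.

End Digraph.

Local Open Scope ring_scope.

Definition boundary_weight (R : numDomainType) (T : finType) (e : rel T) (lam : R)
  (X : {set T}) : R := #|X|%:R + lam * #|boundary e X|%:R.

Definition popular (R : numDomainType) (T : finType) (e : rel T) (C : {set T}) (t : R) :
  {set T} := [set y in C | t <= #|in_nbhd_in e C y|%:R].

Section Expansion.
Variables (R : realFieldType) (T : finType) (e : rel T) (lam : R).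
Hypothesis lam_gt0 : 0 < lam.

Lemma exists_min_boundary_weight : (0 < #|T|)%N ->
  exists2 C, C != set0 &
    forall X, X != set0 -> boundary_weight e lam C <= boundary_weight e lam X.
Proof.
rewrite -cardsT card_gt0 => TN0.
case: (@arg_minP _ R _ _ (fun X => X != set0) (boundary_weight e lam) TN0) => C CN0 Cmin.
by exists C => // X /Cmin.
Qed.

Variable C : {set T}.
Hypothesis C_min : forall X, X != set0 -> boundary_weight e lam C <= boundary_weight e lam X.

Lemma min_boundary_weight_expands X : X != set0 -> X \subset C ->
  #|C|%:R - #|X|%:R <= lam * #|boundary e X :&: C|%:R.
Proof.
move=> XN0 sXC; have := C_min XN0; rewrite /boundary_weight.
have : lam * #|boundary e X|%:R <= lam * #|boundary e X :&: C|%:R + lam * #|boundary e C|%:R.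
  by rewrite -mulrDr ler_pM2l // -natrD ler_nat card_boundary_subset.
lra.
Qed.

Lemma min_boundary_weight_boundary : C != set0 -> lam * #|boundary e C|%:R <= #|T|%:R.
Proof.
move=> CN0; have TN0 : [set: T] != set0.
  by apply: contraNneq CN0 => T0; rewrite -subset0 -T0 subsetT.
have := C_min TN0; rewrite /boundary_weight cardsT.
have -> : boundary e [set: T] = set0 by apply/setP => z; rewrite !inE.
rewrite cards0 mulr0 addr0; have := ler0n R #|C|; lra.
Qed.

End Expansion.

Section BallGrowth.
Variables (R : realFieldType) (T : finType) (e : rel T) (lam : R) (C S : {set T}) (x : T).
Hypothesis lam_gt0 : 0 < lam.
Hypothesis C_expands : forall X, X != set0 -> X \subset C ->
  #|C|%:R - #|X|%:R <= lam * #|boundary e X :&: C|%:R.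
Hypotheses (xC : x \in C) (xNS : x \notin S).

Let B i := ball e S x i.

Lemma card_ball_succ s i : s <= #|C :\: B i|%:R ->
  #|B i :&: C|%:R + (s / lam - #|S|%:R) <= #|B i.+1 :&: C|%:R.
Proof.
move=> le_s; set X := B i :&: C; set Y := B i.+1 :&: C.
have sXC : X \subset C by apply: subsetIr.
have sXY : X \subset Y by apply: setSI; apply: ball_subS.
have XN0 : X != set0 by apply/set0Pn; exists x; rewrite inE ball_center.
have CX : #|C :\: B i| = (#|C| - #|X|)%N.
  by rewrite cardsD setIC.
have le_b : s / lam <= #|boundary e X :&: C|%:R.
  rewrite ler_pdivrMr // mulrC; apply: le_trans (C_expands XN0 sXC).
  by rewrite -natrB ?subset_leq_card // -CX.
have sub_new : (boundary e X :&: C) :\: S \subset Y :\: X.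
  apply/subsetP => z; rewrite !inE => /andP[zNS /andP[/andP[zNX /existsP[v /andP[vX evz]]] zC]].
  rewrite zNX zC andbT /= zNS /=; apply/orP; right; apply/existsP; exists v.
  by rewrite evz andbT; move: vX; rewrite inE => /andP[].
have : (#|boundary e X :&: C| <= #|S| + #|Y :\: X|)%N.
  rewrite -(cardsID S (_ :&: C)); apply: leq_add; last exact: subset_leq_card.
  exact/subset_leq_card/subsetIr.
rewrite -(ler_nat R) natrD cardsD (setIidPr sXY) natrB ?subset_leq_card //.
lra.
Qed.

Lemma ball_growth s i :
  #|C :\: B i|%:R < s \/ i%:R * (s / lam - #|S|%:R) <= #|B i :&: C|%:R.
Proof.
have shrink j : (#|C :\: B j.+1| <= #|C :\: B j|)%N.
  by rewrite subset_leq_card // setDS // ball_subS.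
elim: i => [|i [lt_s | IHi]]; first by right; rewrite mul0r.
  by left; apply: le_lt_trans lt_s; rewrite ler_nat.
have [lt_s | le_s] := ltrP #|C :\: B i.+1|%:R s; first by left.
have := card_ball_succ (le_trans le_s _ : s <= #|C :\: B i|%:R).
rewrite ler_nat shrink -natr1 mulrDl mul1r => /(_ isT); lra.
Qed.

Lemma card_complement_ball_lt s i : #|T|%:R < i%:R * (s / lam - #|S|%:R) ->
  #|C :\: B i|%:R < s.
Proof.
have := ler_nat R #|B i :&: C| #|T|; rewrite max_card.
by case: (ball_growth s i) => // le_ball /(le_trans le_ball) /=; rewrite leNgt => /negbTE->.
Qed.

End BallGrowth.

Section Popular.
Variables (R : realFieldType) (T : finType) (e : rel T).

Lemma avoiding_path_from_ball (C S : {set T}) x y i (s : R) : y \notin S ->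
  #|C :\: ball e S x i|%:R < s -> s + #|S|%:R <= #|in_nbhd_in e C y|%:R ->
  exists p, avoiding_path e S x y p /\ (size p <= i.+1)%N.
Proof.
move=> yNS lt_s le_in; set Q := in_nbhd_in e C y :\: S.
have : Q :&: ball e S x i != set0.
  apply: contraTneq lt_s => QB0; rewrite -leNgt.
  have : (#|in_nbhd_in e C y| <= #|S| + #|Q|)%N.
    by rewrite -(cardsID S (in_nbhd_in e C y)) leq_add2r subset_leq_card ?subsetIr.
  have : (#|Q| <= #|C :\: ball e S x i|)%N.
    apply/subset_leq_card/subsetP => z zQ; have := zQ; rewrite !inE => /and3P[_ zC _].
    rewrite zC andbT; apply/negP => zB.
    have : z \in Q :&: ball e S x i by rewrite inE zQ zB.
    by rewrite QB0 inE.
  rewrite -!(ler_nat R) natrD; lra.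
case/set0Pn => u; rewrite inE => /andP[uQ uB].
have [p [pu lep]] := ball_path uB.
have euy : e u y by move: uQ; rewrite !inE => /and3P[].
have [q [qy leq]] := avoiding_path_rcons pu euy yNS.
by exists q; split => //; apply: leq_trans leq _.
Qed.

Lemma card_popular_ge (C : {set T}) (delta b : nat) (t : R) : C != set0 -> 0 <= t ->
  (forall v, v \in C -> delta <= #|out_nbhd_in e C v| + b)%N ->
  delta%:R - b%:R - t <= #|popular e C t|%:R.
Proof.
move=> CN0 t_ge0 le_out; set A := popular e C t.
have sAC : A \subset C by apply/subsetP => y; rewrite inE => /andP[].
have le_C y : (#|in_nbhd_in e C y| <= #|C|)%N.
  by apply/subset_leq_card/subsetP => v; rewrite inE => /andP[].
have sum_out : (#|C| * delta <= \sum_(y in C) #|in_nbhd_in e C y| + #|C| * b)%N.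
  by rewrite -sum_card_out_nbhd_in -!sum_nat_const -big_split; apply: leq_sum.
have sum_in : \sum_(y in C) (#|in_nbhd_in e C y|%:R : R) <= #|A|%:R * #|C|%:R + #|C|%:R * t.
  rewrite (big_setID A) (setIidPr sAC) /=; apply: lerD.
    by rewrite mulr_natl -sumr_const; apply: ler_sum => y _; rewrite ler_nat.
  apply: le_trans (_ : \sum_(y in C :\: A) t <= _).
    by apply: ler_sum => y /setDP[yC]; rewrite inE yC -ltNge => /ltW.
  rewrite sumr_const -[t *+ _]mulr_natl ler_wpM2r //.
  by rewrite ler_nat subset_leq_card ?subsetDl.
have C_gt0 : (0 : R) < #|C|%:R by rewrite ltr0n card_gt0.
rewrite -(ler_pM2l C_gt0); move: sum_out; rewrite -(ler_nat R) natrD !natrM natr_sum.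
lra.
Qed.

Lemma popular_kd_connected (C : {set T}) (lam s : R) (k i : nat) : 0 < lam ->
  (forall X, X != set0 -> X \subset C ->
     #|C|%:R - #|X|%:R <= lam * #|boundary e X :&: C|%:R) ->
  #|T|%:R < i%:R * (s / lam - k%:R) ->
  kd_connected e k (i.+1%:R : R) (popular e C (s + k%:R)).
Proof.
move=> lam_gt0 C_expands lt_T S ltSk x y.
rewrite !inE => /andP[xNS /andP[xC _]] /andP[yNS /andP[_ popy]].
have leSk : #|S|%:R <= k%:R :> R by rewrite ler_nat ltnW.
have lt_T' : #|T|%:R < i%:R * (s / lam - #|S|%:R).
  by apply: (lt_le_trans lt_T); rewrite ler_wpM2l // lerD2l lerN2.
have lt_s := card_complement_ball_lt lam_gt0 C_expands xC xNS lt_T'.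
have [|p [pxy lep]] := avoiding_path_from_ball yNS lt_s.
  by apply: le_trans popy; rewrite lerD2l.
by exists p; rewrite ler_nat.
Qed.
End Popular.

Lemma kd_connected_le (R : realFieldType) (T : finType) (e : rel T) k (d1 d2 : R) A :
  d1 <= d2 -> kd_connected e k d1 A -> kd_connected e k d2 A.
Proof.
move=> le_d conA S ltSk x y xA yA; have [p [pxy lep]] := conA S ltSk x y xA yA.
by exists p; split => //; apply: le_trans le_d.
Qed.

Lemma exists_floor_div (R : realFieldType) (n : nat) (g : R) : 1 <= g ->
  exists i : nat, i%:R * g <= n%:R < i.+1%:R * g.
Proof.
move=> g_ge1; have exP : exists i : nat, n%:R < i%:R * g.
  exists n.+1; apply: (@lt_le_trans _ _ n.+1%:R); first by rewrite ltr_nat.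
  by rewrite -[X in X <= _]mulr1 ler_wpM2l.
case: (ex_minnP exP) => -[|i] lt_n min_i; first by rewrite mul0r ltNge ler0n in lt_n.
exists i; rewrite lt_n andbT leNgt; apply/negP => /min_i.
by rewrite ltnn.
Qed.

Lemma exists_kd_connected_popular (R : realFieldType) (T : finType) (e : rel T)
  (lam s : R) (k i : nat) : 0 < lam -> 0 <= s + k%:R -> (0 < #|T|)%N ->
  #|T|%:R < i%:R * (s / lam - k%:R) ->
  exists A : {set T}, kd_connected e k (i.+1%:R : R) A /\
    (mindeg e)%:R - #|T|%:R / lam - (s + k%:R) <= #|A|%:R.
Proof.
move=> lam_gt0 sk_ge0 T_gt0 lt_T.
have [C CN0 C_min] := exists_min_boundary_weight e lam T_gt0.
have C_expands := min_boundary_weight_expands lam_gt0 C_min.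
exists (popular e C (s + k%:R)); split; first exact: popular_kd_connected lt_T.
have le_out v : v \in C -> (mindeg e <= #|out_nbhd_in e C v| + #|boundary e C|)%N.
  move=> vC; exact: leq_trans (mindeg_le_outdeg e v) (outdeg_le_out_nbhd_in_boundary e vC).
apply: le_trans (card_popular_ge CN0 sk_ge0 le_out); rewrite lerD2r lerD2l lerN2.
by rewrite ler_pdivlMr // mulrC; apply: min_boundary_weight_boundary.
Qed.

Theorem mainTheorem6 (R : realFieldType) (eps : R) (k : nat) (heps : 0 < eps)
  (T : finType) (e : rel T) (hloop : irreflexive e)
  (hN : 32 * k%:R / eps ^+ 2 <= #|T|%:R) :
  exists A : {set T},
    kd_connected e k (40 / eps ^+ 2) A /\
    (mindeg e)%:R - eps * #|T|%:R <= #|A|%:R.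
Proof.
have le_degn : (mindeg e)%:R <= #|T|%:R :> R by rewrite ler_nat mindeg_le_card.
set n := #|T| in hN le_degn *.
have epsn_ge0 : 0 <= eps * n%:R by rewrite mulr_ge0 ?ler0n ?ltW.
have [small | big] := lerP (mindeg e)%:R (eps * n%:R).
  by exists set0; split => [S _ x y | ]; rewrite ?inE ?andbF // cards0; lra.
case: k hN => [|k] hN.
  by exists setT; split => [S | ]; rewrite ?ltn0 // cardsT; lra.
set t := eps ^+ 2; set lam := 4 / eps; set s := eps * n%:R / 2.
have n_gt0 : (0 < n)%N by rewrite -(ltr0n R); lra.
have t_gt0 : 0 < t by rewrite exprn_gt0.
have t_lt_eps : t < eps.
  by rewrite /t expr2 gtr_pMr // -(ltr_pM2r (_ : 0 < n%:R)) ?ltr0n //; lra.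
have kt : 32 * k.+1%:R <= t * n%:R by move: hN; rewrite ler_pdivrMr // [n%:R * _]mulrC.
have [n_lam s_lam] : n%:R / lam = eps * n%:R / 4 /\ s / lam = t * n%:R / 8.
  by split; rewrite /lam /s /t; field; rewrite lt0r_neq0.
have k_ge1 : 1 <= k.+1%:R :> R by rewrite ler1n.
have [|i /andP[le_i lt_n]] := exists_floor_div n (_ : 1 <= s / lam - k.+1%:R).
  by rewrite s_lam; lra.
have [||A [conA cardA]] := exists_kd_connected_popular e (_ : 0 < lam) _ n_gt0 lt_n.
  - by rewrite divr_gt0.
  - by rewrite /s; lra.
exists A; split.
  apply: kd_connected_le conA.
  have : i%:R * (3 * t * n%:R / 32) <= n%:R.
    by apply: le_trans le_i; rewrite ler_wpM2l // s_lam; lra.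
  rewrite ler_pdivlMr // -addn2 natrD; nra.
apply: le_trans cardA; rewrite n_lam.
have : t * n%:R <= eps * n%:R by rewrite ler_pM2r ?ltr0n // ltW.
rewrite /s; lra.
Qed.
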